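(* Let $\mathcal{X}$ be a finite set, $\pi$ a probability mass function on $\mathcal{X}$ with full support, and fix a group action of $\mathcal{G}$ on $\mathcal{X}$ with associated Gibbs, Metropolis–Hastings and Barker orbit kernels $G$, $M$, $B$. Let $\mathbf{G}=\{P\in\mathcal{S}(\pi):GPG=P\}$, $\mathbf{M}=\{P\in\mathcal{S}(\pi):MPM=P\}$, $\mathbf{B}=\{P\in\mathcal{S}(\pi):BPB=P\}$. If each orbit block of $G$, $M$ and $B$ is aperiodic, then $\mathbf{G}=\mathbf{M}=\mathbf{B}$.
   Context: $\mathcal{S}(\pi)$ is the set of transition matrices $P$ on $\mathcal{X}$ with $\pi P=\pi$. With $\mathcal{O}(x)$ the orbit of $x$: $G(x,y)=\pi(y)/\pi(\mathcal{O}(x))$ for $y\in\mathcal{O}(x)$, else $0$; $M(x,y)=\frac{1}{|\mathcal{O}(x)|-1}\min\{1,\pi(y)/\pi(x)\}$ for $y\in\mathcal{O}(x)\setminus\{x\}$, $0$ off the orbit, $M(x,x)=1-\sum_{y\ne x}M(x,y)$; $B$ is the same with acceptance $\pi(y)/(\pi(x)+\pi(y))$. These kernels are block diagonal with one block per orbit; aperiodicity of a block refers to the Markov chain on that orbit given by the block. *)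

From mathcomp Require Import all_boot all_order all_fingroup all_algebra.
Set Implicit Arguments. Unset Strict Implicit. Unset Printing Implicit Defensive.
Import Order.TTheory GRing.Theory Num.Theory.
Local Open Scope ring_scope.

Section Kernels.
Variables (R : realFieldType) (X : finType).

Definition kmul (P Q : X -> X -> R) : X -> X -> R :=
  fun x y => \sum_(z : X) P x z * Q z y.

Definition kid : X -> X -> R := fun x y => (x == y)%:R.

Fixpoint kpow (P : X -> X -> R) (n : nat) : X -> X -> R :=
  if n is m.+1 then kmul (kpow P m) P else kid.

Definition stochastic (P : X -> X -> R) : Prop :=
  (forall x y, 0 <= P x y) /\ (forall x, \sum_(y : X) P x y = 1).

Definition in_S (pi : X -> R) (P : X -> X -> R) : Prop :=
  stochastic P /\ (forall y, \sum_(x : X) pi x * P x y = pi y).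

Definition inv_set (pi : X -> R) (K P : X -> X -> R) : Prop :=
  in_S pi P /\ (forall x y, kmul (kmul K P) K x y = P x y).

(* period of x is 1: the gcd of {n > 0 : K^n(x,x) > 0} equals 1 *)
Definition aperiodic_at (K : X -> X -> R) (x : X) : Prop :=
  forall d : nat, (forall n : nat, (0 < n)%N -> 0 < kpow K n x x -> (d %| n)%N) ->
    d = 1%N.

Definition aperiodic_block (K : X -> X -> R) (O : {set X}) : Prop :=
  forall x, x \in O -> aperiodic_at K x.

End Kernels.

Section OrbitKernels.
Variables (R : realFieldType) (X : finType) (gT : finGroupType).
Variables (H : {group gT}) (to : {action gT &-> X}) (pi : X -> R).

Definition act_orbit (x : X) : {set X} := orbit to H x.

Definition act_orbit_mass (x : X) : R := \sum_(z in act_orbit x) pi z.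

Definition gibbs_kernel : X -> X -> R :=
  fun x y => if y \in act_orbit x then pi y / act_orbit_mass x else 0.

Definition mh_offdiag (x y : X) : R :=
  if (y \in act_orbit x) && (y != x) then
    (#|act_orbit x|%:R - 1)^-1 * Num.min 1 (pi y / pi x)
  else 0.

Definition mh_kernel : X -> X -> R :=
  fun x y => if y == x then 1 - \sum_(z | z != x) mh_offdiag x z
             else mh_offdiag x y.

Definition barker_offdiag (x y : X) : R :=
  if (y \in act_orbit x) && (y != x) then
    (#|act_orbit x|%:R - 1)^-1 * (pi y / (pi x + pi y))
  else 0.

Definition barker_kernel : X -> X -> R :=
  fun x y => if y == x then 1 - \sum_(z | z != x) barker_offdiag x z
             else barker_offdiag x y.

End OrbitKernels.

(* Each of the kernels K = G, M, B is reversible for pi, lives on the orbit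
   blocks and absorbs G: KG = G = GK.  Hence GPG = P gives
   KPK = (KG)P(GK) = GPG = P.  Conversely, let KPK = P and Q = PK, so P = KQ.
   Averaging by K contracts L^2(pi), with a local variance as defect; applied
   to the columns of Q, and (after the pi-weighted transpose) to the rows of P,
   it gives |P| <= |Q| <= |P|, so both defects vanish.  Two states of a block
   always have a common K-predecessor -- aperiodicity rules out the one
   exception, a two-point block swapped deterministically -- so the columns
   of Q and the pi-rescaled rows of P are constant on blocks: GQ = Q and
   PG = P.  Then P = KQ = KGQ = GQ = Q and GPG = P. *)

From mathcomp Require Import all_boot all_order all_fingroup all_algebra.
From mathcomp Require Import ring lra.
From Stdlib Require Import FunctionalExtensionality.
Import Order.TTheory GRing.Theory Num.Theory.
Local Open Scope ring_scope.

Set Implicit Arguments. Unset Strict Implicit. Unset Printing Implicit Defensive.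

Lemma sum_pair_sqr_diff (R : comPzRingType) (I : finType) (p f : I -> R) :
  \sum_i p i = 1 ->
  \sum_i \sum_j p i * p j * (f i - f j) ^+ 2 =
  2 * (\sum_i p i * f i ^+ 2 - (\sum_i p i * f i) ^+ 2).
Proof.
move=> p1.
have expand i j : p i * p j * (f i - f j) ^+ 2 =
    p i * f i ^+ 2 * p j + p i * (p j * f j ^+ 2)
    - 2 * (p i * f i * (p j * f j)) by ring.
under eq_bigr do under eq_bigr do rewrite expand.
under eq_bigr do rewrite sumrB big_split /= -mulr_sumr -mulr_sumr -mulr_sumr.
rewrite sumrB big_split /= -!mulr_suml -mulr_sumr -big_distrlr /= p1.
by rewrite expr2; ring.
Qed.

Section KernelAlgebra.
Variables (R : realFieldType) (X : finType).
Implicit Types (K P Q : X -> X -> R).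

Lemma kernel_ext P Q : (forall x y, P x y = Q x y) -> P = Q.
Proof.
by move=> PQ; apply: functional_extensionality => x; apply: functional_extensionality.
Qed.

Lemma kmulA P Q (S : X -> X -> R) : kmul (kmul P Q) S = kmul P (kmul Q S).
Proof.
apply: kernel_ext => x y; rewrite /kmul.
under eq_bigr do rewrite big_distrl /=.
rewrite exchange_big /=; apply: eq_bigr => z _.
by rewrite big_distrr /=; apply: eq_bigr => u _; rewrite mulrA.
Qed.

Lemma kpow_swap_support K z w :
  (forall u, u != w -> K z u = 0) -> (forall u, u != z -> K w u = 0) ->
  forall n u, kpow K n z u != 0 -> u = if odd n then w else z.
Proof.
move=> Kz Kw; elim=> [|n IHn] u /=.
  by rewrite /kid; case: (eqVneq z u) => [-> //|_]; rewrite eqxx.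
rewrite /kmul (bigD1 (if odd n then w else z)) //= big1 ?addr0; last first.
  move=> v /negbTE vn; apply/eqP; rewrite mulf_eq0; apply/orP; left.
  by apply/negPn/negP => /IHn /eqP; rewrite vn.
rewrite mulf_eq0 negb_or => /andP [_]; case: (odd n) => /= Ku.
  by apply/eqP; apply: contraNT Ku => /Kw ->.
by apply/eqP; apply: contraNT Ku => /Kz ->.
Qed.

Lemma swap_not_aperiodic K z w :
  z != w -> (forall u, u != w -> K z u = 0) -> (forall u, u != z -> K w u = 0) ->
  ~ aperiodic_at K z.
Proof.
move=> zw Kz Kw aperiodic; suff: (2 = 1)%N by [].
apply: aperiodic => n _ /gt_eqF/negbT/(kpow_swap_support Kz Kw).
by rewrite dvdn2; case: (odd n) => // wz; rewrite wz eqxx in zw.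
Qed.

End KernelAlgebra.

Section Blocks.
Variables (R : realFieldType) (X : finType) (O : X -> {set X}) (pi : X -> R).
Hypothesis block_refl : forall x, x \in O x.
Hypothesis block_eq : forall x y, y \in O x -> O y = O x.
Hypothesis pi_gt0 : forall x, 0 < pi x.
Implicit Types (K P Q F : X -> X -> R) (f : X -> R).

Lemma block_sym x y : (y \in O x) = (x \in O y).
Proof. by apply/idP/idP => /block_eq ->. Qed.

Definition block_mass x := \sum_(z in O x) pi z.

Definition block_gibbs x y := if y \in O x then pi y / block_mass x else 0.

Lemma block_mass_gt0 x : 0 < block_mass x.
Proof.
rewrite /block_mass (bigD1 x) //= ltr_wpDr //.
by apply: sumr_ge0 => z _; apply: ltW.
Qed.

Lemma block_mass_eq x y : y \in O x -> block_mass y = block_mass x.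
Proof. by move=> /block_eq Oyx; rewrite /block_mass Oyx. Qed.

Record block_reversible K : Prop := BlockReversible {
  kernel_ge0 : forall x y, 0 <= K x y;
  kernel_sum1 : forall x, \sum_y K x y = 1;
  kernel_balance : forall x y, pi x * K x y = pi y * K y x;
  kernel_off_block : forall x y, y \notin O x -> K x y = 0 }.

Definition block_positive K := forall x y, y \in O x -> y != x -> 0 < K x y.

Definition blockwise F := forall y z w, w \in O z -> F z y = F w y.

Definition kdual F : X -> X -> R := fun y x => F x y / pi y.

Lemma gibbs_block_reversible : block_reversible block_gibbs.
Proof.
split=> [x y | x | x y | x y /negbTE yNx]; rewrite /block_gibbs.
- by case: ifP => // _; rewrite divr_ge0 // ltW // block_mass_gt0.
- by rewrite -big_mkcond /= -mulr_suml divff // gt_eqF // block_mass_gt0.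
- rewrite -block_sym; case: ifP => [yx | _]; last by rewrite !mulr0.
  by rewrite (block_mass_eq yx) !mulrA [pi x * _]mulrC.
- by rewrite yNx.
Qed.

Section Reversible.
Variable K : X -> X -> R.
Hypothesis K_rev : block_reversible K.

Lemma kernel_stationary y : \sum_x pi x * K x y = pi y.
Proof.
under eq_bigr do rewrite kernel_balance //.
by rewrite -mulr_sumr kernel_sum1 // mulr1.
Qed.

Lemma kdual_kmul F : kdual (kmul F K) = kmul K (kdual F).
Proof.
apply: kernel_ext => y x; rewrite /kdual /kmul mulr_suml.
apply: eq_bigr => z _.
have [pz_neq0 py_neq0] := (lt0r_neq0 (pi_gt0 z), lt0r_neq0 (pi_gt0 y)).
have -> : K z y = pi y * K y z / pi z.
  by rewrite -(kernel_balance K_rev z y) mulrAC divff // mul1r.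
by field; rewrite pz_neq0.
Qed.

Lemma kmul_blockwise F : blockwise F -> kmul K F = F.
Proof.
move=> Fb; apply: kernel_ext => x y; rewrite /kmul.
transitivity (\sum_z K x z * F x y); last by rewrite -mulr_suml kernel_sum1 ?mul1r.
apply: eq_bigr => z _; case: (boolP (z \in O x)) => [zx | zNx].
  by rewrite (Fb y x z zx).
by rewrite kernel_off_block // !mul0r.
Qed.

End Reversible.

Lemma kdual_inj : injective kdual.
Proof.
move=> F G /(congr1 (fun H => H^~ _ _)) eqFG; apply: kernel_ext => x y.
by have := eqFG x y; rewrite /kdual => /(divIf (lt0r_neq0 (pi_gt0 y))).
Qed.

Lemma kmul_blockwise_dual K F :
  block_reversible K -> blockwise (kdual F) -> kmul F K = F.
Proof. by move=> K_rev Fb; apply: kdual_inj; rewrite kdual_kmul // kmul_blockwise. Qed.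

Lemma blockwise_gibbs : blockwise block_gibbs.
Proof.
by move=> y z w wz; rewrite /block_gibbs (block_eq wz) (block_mass_eq wz).
Qed.

Lemma blockwise_kdual_gibbs : blockwise (kdual block_gibbs).
Proof.
move=> x z w wz; rewrite /kdual /block_gibbs !(block_sym x) (block_eq wz).
case: ifP => _; last by rewrite !mul0r.
by rewrite [pi z / _ / _]mulrAC [pi w / _ / _]mulrAC !divff ?lt0r_neq0.
Qed.

Lemma kmul_gibbs_r K : block_reversible K -> kmul K block_gibbs = block_gibbs.
Proof. by move=> K_rev; exact: (kmul_blockwise K_rev blockwise_gibbs). Qed.

Lemma kmul_gibbs_l K : block_reversible K -> kmul block_gibbs K = block_gibbs.
Proof. by move=> K_rev; exact: (kmul_blockwise_dual K_rev blockwise_kdual_gibbs). Qed.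

Definition wnorm (w : X -> R) F := \sum_y w y * \sum_x pi x * F x y ^+ 2.

Lemma wnorm_kdual F : wnorm pi (kdual F) = wnorm (fun y => (pi y)^-1) F.
Proof.
rewrite /wnorm /kdual; under eq_bigr do rewrite mulr_sumr.
rewrite exchange_big /=; apply: eq_bigr => y _; rewrite mulr_sumr.
by apply: eq_bigr => x _; field; rewrite lt0r_neq0.
Qed.

Section BlockKernel.
Variable K : X -> X -> R.
Hypothesis K_rev : block_reversible K.
Hypothesis K_pos : block_positive K.
Hypothesis K_aper : forall x, aperiodic_at K x.

Lemma common_predecessor z w :
  w \in O z -> w != z -> exists2 x, 0 < K x z & 0 < K x w.
Proof.
move=> wz wNz; have zw : z \in O w by rewrite -block_sym.
have Kdiag0 u : K u u <= 0 -> K u u = 0.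
  by move=> Kuu; apply/eqP; rewrite eq_le Kuu (kernel_ge0 K_rev).
case: (ltrP 0 (K z z)) => [Kzz | /Kdiag0 Kzz].
  by exists z => //; apply: K_pos.
case: (ltrP 0 (K w w)) => [Kww | /Kdiag0 Kww].
  by exists w => //; apply: K_pos; rewrite // eq_sym.
case: (pickP [pred u | [&& u \in O z, u != z & u != w]]).
  move=> u /and3P [uz uNz uNw]; have Ou := block_eq uz.
  by exists u; apply: K_pos; rewrite ?Ou // eq_sym.
move=> noother; move: (@K_aper z) => /(@swap_not_aperiodic _ _ K z w) [].
- by rewrite eq_sym.
- move=> u uNw; have [uz | uNz] := boolP (u \in O z); last exact: kernel_off_block.
  have := noother u; rewrite /= uz uNw andbT => /negbFE/eqP ->.
  exact: Kzz.
- move=> u uNz; have [uw | uNw] := boolP (u \in O w); last exact: kernel_off_block.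
  have := noother u; rewrite /= -(block_eq wz) uw uNz /= => /negbFE/eqP ->.
  exact: Kww.
Qed.

Definition kvar f := \sum_x pi x * \sum_z \sum_w K x z * K x w * (f z - f w) ^+ 2.

Lemma kvar_term_ge0 f x z w : 0 <= K x z * K x w * (f z - f w) ^+ 2.
Proof. by rewrite mulr_ge0 ?sqr_ge0 // mulr_ge0 ?(kernel_ge0 K_rev). Qed.

Lemma kvar_row_ge0 f x : 0 <= \sum_z \sum_w K x z * K x w * (f z - f w) ^+ 2.
Proof. by do 2!(apply: sumr_ge0 => ? _); apply: kvar_term_ge0. Qed.

Lemma kvar_ge0 f : 0 <= kvar f.
Proof. by apply: sumr_ge0 => x _; rewrite mulr_ge0 ?kvar_row_ge0 // ltW. Qed.

(* Jensen's inequality for the averaging operator K on L^2(pi), with its defect. *)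
Lemma kvar_jensen f :
  2 * \sum_x pi x * (\sum_z K x z * f z) ^+ 2 + kvar f =
  2 * \sum_z pi z * f z ^+ 2.
Proof.
rewrite /kvar.
under [X in _ + X]eq_bigr do rewrite sum_pair_sqr_diff ?kernel_sum1 //.
have avg_sqr : \sum_x pi x * \sum_z K x z * f z ^+ 2 = \sum_z pi z * f z ^+ 2.
  under eq_bigr do rewrite mulr_sumr.
  rewrite exchange_big /=; apply: eq_bigr => z _.
  rewrite -(kernel_stationary K_rev z) mulr_suml.
  by apply: eq_bigr => x _; rewrite mulrA.
rewrite -avg_sqr !mulr_sumr -big_split /=; apply: eq_bigr => x _; ring.
Qed.

Lemma kvar_eq0 f : kvar f = 0 -> forall z w, w \in O z -> f z = f w.
Proof.
move=> var0 z w wz; have [-> // | wNz] := eqVneq w z.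
have [x Kxz Kxw] := common_predecessor wz wNz.
have := psumr_eq0P (fun x' _ => mulr_ge0 (ltW (pi_gt0 x')) (kvar_row_ge0 f x'))
  var0 (i := x) isT.
move=> /eqP; rewrite mulf_eq0 gt_eqF //= => /eqP row0.
have row_z0 := psumr_eq0P
  (fun z' _ => sumr_ge0 _ (fun w' _ => kvar_term_ge0 f x z' w')) row0 (i := z) isT.
have /eqP := psumr_eq0P (fun w' _ => kvar_term_ge0 f x z w') row_z0 (i := w) isT.
by rewrite !mulf_eq0 (gt_eqF Kxz) (gt_eqF Kxw) /= orbb subr_eq0 => /eqP.
Qed.

Definition wdefect (w : X -> R) F := \sum_y w y * kvar (fun x => F x y).

Lemma wnorm_kmul w F : 2 * wnorm w (kmul K F) + wdefect w F = 2 * wnorm w F.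
Proof.
rewrite /wnorm /wdefect !mulr_sumr -big_split /=; apply: eq_bigr => y _.
by rewrite [RHS]mulrCA -(kvar_jensen (fun x => F x y)) /kmul; ring.
Qed.

Lemma wdefect_ge0 w F : (forall y, 0 <= w y) -> 0 <= wdefect w F.
Proof. by move=> w_ge0; apply: sumr_ge0 => y _; rewrite mulr_ge0 ?kvar_ge0. Qed.

Lemma wdefect_eq0 w F : (forall y, 0 < w y) -> wdefect w F = 0 -> blockwise F.
Proof.
move=> w_gt0 defect0 y; apply: kvar_eq0.
have := psumr_eq0P (fun y' _ => mulr_ge0 (ltW (w_gt0 y')) (kvar_ge0 _))
  defect0 (i := y) isT.
by move=> /eqP; rewrite mulf_eq0 gt_eqF //= => /eqP.
Qed.

Lemma gibbs_invariant P :
  kmul (kmul K P) K = P -> kmul (kmul block_gibbs P) block_gibbs = P.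
Proof.
move=> KPK; set Q := kmul P K.
have KQ : kmul K Q = P by rewrite /Q -kmulA.
have pi_inv_gt0 y : 0 < (pi y)^-1 by rewrite invr_gt0.
have normP := wnorm_kmul (fun y => (pi y)^-1) Q; rewrite KQ in normP.
have normQ := wnorm_kmul pi (kdual P).
rewrite -kdual_kmul // !wnorm_kdual in normQ.
have defectQ := wdefect_ge0 Q (fun y => ltW (pi_inv_gt0 y)).
have defectP := wdefect_ge0 (kdual P) (fun y => ltW (pi_gt0 y)).
have Qb : blockwise Q by apply: (wdefect_eq0 pi_inv_gt0); lra.
have Pb : blockwise (kdual P) by apply: (wdefect_eq0 pi_gt0); lra.
have GQ : kmul block_gibbs Q = Q := kmul_blockwise gibbs_block_reversible Qb.
have PG : kmul P block_gibbs = P := kmul_blockwise_dual gibbs_block_reversible Pb.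
have PQ : P = Q by rewrite -KQ -GQ -kmulA kmul_gibbs_r.
by rewrite {1}PQ GQ -PQ PG.
Qed.

End BlockKernel.

Lemma invariant_of_gibbs_invariant K P : block_reversible K ->
  kmul (kmul block_gibbs P) block_gibbs = P -> kmul (kmul K P) K = P.
Proof.
move=> K_rev GPG.
by rewrite -{1}GPG -!kmulA (kmul_gibbs_r K_rev) kmulA (kmul_gibbs_l K_rev).
Qed.

Lemma inv_set_gibbs K P : block_reversible K -> block_positive K ->
  (forall x, aperiodic_at K x) ->
  inv_set pi K P <-> inv_set pi block_gibbs P.
Proof.
move=> K_rev K_pos K_aper; split=> -[P_S P_inv]; split=> // x y.
  by rewrite (gibbs_invariant K_rev K_pos K_aper (kernel_ext P_inv)).
by rewrite (invariant_of_gibbs_invariant K_rev (kernel_ext P_inv)).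
Qed.

End Blocks.

Section AcceptanceKernels.
Variables (R : realFieldType) (X : finType) (O : X -> {set X}) (pi : X -> R).
Hypothesis block_refl : forall x, x \in O x.
Hypothesis block_eq : forall x y, y \in O x -> O y = O x.
Hypothesis pi_gt0 : forall x, 0 < pi x.
Variable a : X -> X -> R.
Hypothesis a_gt0 : forall x y, 0 < a x y.
Hypothesis a_le1 : forall x y, a x y <= 1.
Hypothesis a_balance : forall x y, pi x * a x y = pi y * a y x.

(* Propose a uniform other point of the block, accept with probability [a]. *)
Definition accept_offdiag x y :=
  if (y \in O x) && (y != x) then (#|O x|%:R - 1)^-1 * a x y else 0.

Definition accept_kernel x y :=
  if y == x then 1 - \sum_(z | z != x) accept_offdiag x z else accept_offdiag x y.

Lemma block_card_predn x : #|O x|%:R - 1 = #|O x :\ x|%:R :> R.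
Proof. by rewrite (cardsD1 x (O x)) block_refl add1n mulrSr addrK. Qed.

Lemma accept_offdiag_gt0 x y : y \in O x -> y != x -> 0 < accept_offdiag x y.
Proof.
move=> yx yNx; rewrite /accept_offdiag yx yNx mulr_gt0 // invr_gt0.
rewrite block_card_predn ltr0n card_gt0; apply/set0Pn; exists y.
by rewrite in_setD1 yNx.
Qed.

Lemma accept_offdiag_ge0 x y : 0 <= accept_offdiag x y.
Proof.
case: (boolP ((y \in O x) && (y != x))) => [/andP [yx yNx] | off].
  exact/ltW/accept_offdiag_gt0.
by rewrite /accept_offdiag (negbTE off).
Qed.

Lemma accept_offdiag_sum_le1 x : \sum_(z | z != x) accept_offdiag x z <= 1.
Proof.
set n := #|O x :\ x|.
have -> : \sum_(z | z != x) accept_offdiag x z =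
    \sum_(z in O x :\ x) n%:R^-1 * a x z.
  rewrite big_mkcond [RHS]big_mkcond; apply: eq_bigr => z _.
  by rewrite /accept_offdiag in_setD1 block_card_predn andbC; case: (z != x).
apply: (@le_trans _ _ (\sum_(z in O x :\ x) n%:R^-1)).
  apply: ler_sum => z _; rewrite -[leRHS]mulr1 ler_wpM2l ?invr_ge0 ?ler0n //.
rewrite sumr_const -/n -(mulr_natr n%:R^-1 n).
by have [-> | n_neq0] := eqVneq n 0%N; rewrite ?mulr0 ?mulVf ?pnatr_eq0.
Qed.

Lemma accept_kernel_reversible : block_reversible O pi accept_kernel.
Proof.
split=> [x y | x | x y | x y yNx]; rewrite /accept_kernel.
- by case: ifP => _; rewrite ?subr_ge0 ?accept_offdiag_sum_le1 ?accept_offdiag_ge0.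
- rewrite (bigD1 x) //= eqxx; under [X in _ + X]eq_bigr => y /negbTE-> do [].
  by rewrite subrK.
- case: (eqVneq y x) => [-> // | yNx].
  rewrite /accept_offdiag yNx eq_sym yNx !andbT -(block_sym block_refl block_eq).
  case: (boolP (x \in O y)) => [xy | _]; last by rewrite !mulr0.
  by rewrite (block_eq xy) mulrCA a_balance [RHS]mulrCA.
- have /negbTE -> : y != x by apply: contraNneq yNx => ->.
  by rewrite /accept_offdiag (negbTE yNx).
Qed.

Lemma accept_kernel_positive : block_positive O accept_kernel.
Proof.
by move=> x y yx yNx; rewrite /accept_kernel (negbTE yNx) accept_offdiag_gt0.
Qed.

Lemma inv_set_accept_gibbs P : (forall x, aperiodic_at accept_kernel x) ->
  inv_set pi accept_kernel P <-> inv_set pi (block_gibbs O pi) P.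
Proof.
apply: inv_set_gibbs => //; [exact: accept_kernel_reversible |].
exact: accept_kernel_positive.
Qed.

End AcceptanceKernels.

Section MetropolisBarker.
Variables (R : realFieldType) (X : finType) (pi : X -> R).
Hypothesis pi_gt0 : forall x, 0 < pi x.

Definition mh_accept x y := Num.min 1 (pi y / pi x).

Definition barker_accept x y := pi y / (pi x + pi y).

Lemma mh_accept_gt0 x y : 0 < mh_accept x y.
Proof. by rewrite lt_min ltr01 divr_gt0. Qed.

Lemma mh_accept_le1 x y : mh_accept x y <= 1.
Proof. by rewrite ge_min lexx. Qed.

Lemma mh_accept_balance x y : pi x * mh_accept x y = pi y * mh_accept y x.
Proof.
have mulK u v : pi u * (pi v / pi u) = pi v.
  by rewrite mulrCA divff ?mulr1 ?lt0r_neq0.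
by rewrite /mh_accept !minr_pMr ?ltW // !mulr1 !mulK minC.
Qed.

Lemma barker_accept_gt0 x y : 0 < barker_accept x y.
Proof. by rewrite divr_gt0 ?addr_gt0. Qed.

Lemma barker_accept_le1 x y : barker_accept x y <= 1.
Proof. by rewrite ler_pdivrMr ?addr_gt0 // mul1r lerDr ltW. Qed.

Lemma barker_accept_balance x y : pi x * barker_accept x y = pi y * barker_accept y x.
Proof. by rewrite /barker_accept [pi y + _]addrC !mulrA [pi x * _]mulrC. Qed.

End MetropolisBarker.

Theorem proposition5p1 (R : realFieldType) (X : finType) (gT : finGroupType)
  (H : {group gT}) (to : {action gT &-> X}) (pi : X -> R) :
  (forall x, 0 < pi x) -> \sum_(x : X) pi x = 1 ->
  (forall x, aperiodic_block (gibbs_kernel H to pi) (act_orbit H to x)) ->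
  (forall x, aperiodic_block (mh_kernel H to pi) (act_orbit H to x)) ->
  (forall x, aperiodic_block (barker_kernel H to pi) (act_orbit H to x)) ->
  forall P : X -> X -> R,
    (inv_set pi (gibbs_kernel H to pi) P <-> inv_set pi (mh_kernel H to pi) P) /\
    (inv_set pi (mh_kernel H to pi) P <-> inv_set pi (barker_kernel H to pi) P).
Proof.
move=> pi_gt0 _ _ aperM aperB P; set O := act_orbit H to.
have block_refl x : x \in O x by exact: orbit_refl.
have block_eq x y : y \in O x -> O y = O x by move=> /orbit_eqP.
have aper (Q : X -> X -> R) :
    (forall x, aperiodic_block Q (O x)) -> forall x, aperiodic_at Q x.
  by move=> aperQ y; apply: (aperQ y); exact: block_refl.
have mhE : mh_kernel H to pi = accept_kernel O (mh_accept pi) by [].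
have barkerE : barker_kernel H to pi = accept_kernel O (barker_accept pi) by [].
have iffM := inv_set_accept_gibbs block_refl block_eq pi_gt0
  (mh_accept_gt0 pi_gt0) (@mh_accept_le1 _ _ pi) (mh_accept_balance pi_gt0) P.
have iffB := inv_set_accept_gibbs block_refl block_eq pi_gt0
  (barker_accept_gt0 pi_gt0) (barker_accept_le1 pi_gt0) (@barker_accept_balance _ _ pi) P.
rewrite mhE barkerE in aperM aperB *.
have {}iffM := iffM (aper _ aperM); have {}iffB := iffB (aper _ aperB).
by split; [exact: iff_sym iffM | exact: iff_trans iffM (iff_sym iffB)].
Qed.
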